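(* Consider the following model. Fix $n\ge 1$, a vector $\mu\in\mathbb R^n$, $n\times n$ matrices $A,B,C$, a positive definite initial covariance matrix $\Sigma_0$, and an initial price vector $\vec S_0=(S_0^1,\dots,S_0^n)^\top$ with positive entries. Returns and covariances evolve by $$R_{t+1}=\mu+Z_{t+1},\qquad \Sigma_{t+1}=CC^\top+A\Sigma_tA^\top+BZ_{t+1}Z_{t+1}^\top B^\top,$$ where, conditionally on the past, $Z_{t+1}$ has mean $0$ and covariance $\Sigma_t$. Prices evolve by $S^i_{t+1}=h(S^i_t,R^i_{t+1})$ for $1\le i\le n$, for a given function $h$. Set $\Psi_t=\mathrm{diag}(\vec S_t)$ and $P_t=\Psi_t\Sigma_t\Psi_t$. Let $\gamma>0$, $\epsilon>0$, and let $q:\mathbb R^n\times\mathbb R^{n\times n}\to\mathbb R^+$ be a given function. Define $\widetilde P_t=\frac{\gamma}{\epsilon q(\vec S_t,P_t)}P_t$. Assume: (i) $C$ has full rank, so that $c:=\inf_{\|v\|=1}v^\top CC^\top v>0$; (ii) $\|h\|_\infty=\sup_{s,r}|h(s,r)|<\infty$, and there is a constant $\underline s>0$ with $\inf_{s,r}h(s,r)\ge \underline s$; (iii) there is a constant $\chi<\infty$ with $1\le q(s,p)\le\chi$ for all $(s,p)\in\mathbb R^n\times\mathbb R^{n\times n}$. If $\epsilon\chi\|h\|_\infty<\gamma\underline s^2c$, then, writing $\kappa=\chi\|h\|_\infty/(\gamma\underline s^2c)$, $$\sup_t\left\|\left(I+\widetilde P_t\Psi_t^{-1}\right)^{-1}\right\|\le\frac{\epsilon\kappa}{1-\epsilon^2\kappa^2}.$$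 Consequently, for any $\delta\in[0,1)$ and all $\epsilon>0$ small enough, there is a constant $\Delta(\epsilon)<1$ such that $\delta\|(I+\widetilde P_t\Psi_t^{-1})^{-1}\|\le\Delta(\epsilon)$ for all $t$.
   Context: $\|\cdot\|$ denotes the Euclidean norm on vectors and the induced operator (spectral) norm on matrices. $\mathrm{diag}(\vec S_t)$ is the diagonal matrix whose diagonal entries are the entries of $\vec S_t$. *)

From HB Require Import structures.
From mathcomp Require Import all_boot all_order all_algebra.
From mathcomp Require Import all_classical all_reals.
Set Implicit Arguments. Unset Strict Implicit. Unset Printing Implicit Defensive.
Import Order.TTheory GRing.Theory Num.Theory.
Local Open Scope ring_scope.
Local Open Scope classical_set_scope.

Definition vnorm (R : realType) (n : nat) (v : 'cV[R]_n) : R :=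
  Num.sqrt (\sum_(i < n) (v i 0) ^+ 2).

Definition opnorm (R : realType) (n : nat) (M : 'M[R]_n) : R :=
  sup [set vnorm (M *m v) | v in [set v : 'cV[R]_n | vnorm v = 1]].

Definition qform (R : realType) (n : nat) (M : 'M[R]_n) (v : 'cV[R]_n) : R :=
  (v^T *m M *m v) 0 0.

Definition posdef (R : realType) (n : nat) (M : 'M[R]_n) : Prop :=
  M^T = M /\ forall v : 'cV[R]_n, v != 0 -> 0 < qform M v.

Definition cinf (R : realType) (n : nat) (C : 'M[R]_n) : R :=
  inf [set qform (C *m C^T) v | v in [set v : 'cV[R]_n | vnorm v = 1]].

Definition hsup (R : realType) (h : R -> R -> R) : R :=
  sup [set `|h sr.1 sr.2| | sr in [set: R * R]].

Fixpoint Sig (R : realType) (n : nat) (A B C Sig0 : 'M[R]_n)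
    (Z : nat -> 'cV[R]_n) (t : nat) : 'M[R]_n :=
  match t with
  | 0 => Sig0
  | t'.+1 => C *m C^T + A *m Sig A B C Sig0 Z t' *m A^T
             + B *m Z t *m (Z t)^T *m B^T
  end.

Fixpoint Sp (R : realType) (n : nat) (mu S0 : 'cV[R]_n) (h : R -> R -> R)
    (Z : nat -> 'cV[R]_n) (t : nat) : 'cV[R]_n :=
  match t with
  | 0 => S0
  | t'.+1 => \col_i h (Sp mu S0 h Z t' i 0) ((mu + Z t) i 0)
  end.

Definition Psi (R : realType) (n : nat) (S : 'cV[R]_n) : 'M[R]_n := diag_mx S^T.

Definition Pmat (R : realType) (n : nat) (S : 'cV[R]_n) (Sg : 'M[R]_n) : 'M[R]_n :=
  Psi S *m Sg *m Psi S.

Definition Ptilde (R : realType) (n : nat) (gamma eps : R)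
    (q : 'cV[R]_n -> 'M[R]_n -> R) (S : 'cV[R]_n) (Sg : 'M[R]_n) : 'M[R]_n :=
  (gamma / (eps * q S (Pmat S Sg))) *: Pmat S Sg.

Definition Minv (R : realType) (n : nat) (gamma eps : R)
    (q : 'cV[R]_n -> 'M[R]_n -> R) (S : 'cV[R]_n) (Sg : 'M[R]_n) : 'M[R]_n :=
  invmx (1%:M + Ptilde gamma eps q S Sg *m invmx (Psi S)).

From HB Require Import structures.
From mathcomp Require Import all_boot all_order all_algebra.
From mathcomp Require Import all_classical all_reals.
From mathcomp Require Import ring lra.
Set Implicit Arguments. Unset Strict Implicit. Unset Printing Implicit Defensive.
Import Order.TTheory GRing.Theory Num.Theory.
Local Open Scope ring_scope.
Local Open Scope classical_set_scope.

(* With a := gamma / (eps q), the matrix inverted is X = I + a Psi_t Sigma_t.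
   For t >= 1 the covariance dominates C C^T >= c I and all prices are at least
   slow, so pairing w with y := Psi_t^-1 X w = Psi_t^-1 w + a Sigma_t w gives
   a c |w|^2 <= <w, y>, while |y| <= |X w| / slow.  Hence |X w| >= a c slow |w|
   and ||X^-1|| <= 1 / (a c slow) = eps q / (gamma c slow) <= eps kappa, using
   q <= chi and slow <= ||h||_oo.  The bound eps kappa is at most
   eps kappa / (1 - eps^2 kappa^2), and for eps < 1 / kappa it gives the
   constant Delta = delta eps kappa < 1. *)

Section SumsOfSquares.
Variables (R : realFieldType) (I : finType).
Implicit Types (a b : I -> R).

Lemma sum_sqr_ge0 a : 0 <= \sum_i a i ^+ 2.
Proof. by apply: sumr_ge0 => i _; exact: sqr_ge0. Qed.

Lemma sum_sqr_eq0 a : \sum_i a i ^+ 2 = 0 -> forall i, a i = 0.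
Proof.
move=> a0 i; apply/eqP; rewrite -sqrf_eq0; apply/eqP.
by apply: (psumr_eq0P (P := xpredT) (F := fun i => a i ^+ 2)) => // j _; exact: sqr_ge0.
Qed.

Lemma sum_mul_le_sqr a b t :
  2 * t * \sum_i a i * b i <= t ^+ 2 * \sum_i a i ^+ 2 + \sum_i b i ^+ 2.
Proof.
rewrite -subr_ge0.
have -> : t ^+ 2 * \sum_i a i ^+ 2 + \sum_i b i ^+ 2 - 2 * t * \sum_i a i * b i
          = \sum_i (t * a i - b i) ^+ 2.
  rewrite !mulr_sumr -big_split -sumrB /=; apply: eq_bigr => i _; ring.
exact: sum_sqr_ge0.
Qed.

Lemma cauchy_schwarz a b :
  (\sum_i a i * b i) ^+ 2 <= (\sum_i a i ^+ 2) * (\sum_i b i ^+ 2).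
Proof.
set A := \sum_i a i ^+ 2; set S := \sum_i a i * b i.
have [A0|Aneq0] := eqVneq A 0.
  have -> : S = 0 by rewrite /S big1 // => i _; rewrite (sum_sqr_eq0 A0) mul0r.
  by rewrite A0 expr0n mul0r.
have Agt0 : 0 < A by rewrite lt_def Aneq0 sum_sqr_ge0.
have := sum_mul_le_sqr a b (S / A); rewrite -/A -/S.
rewrite -(ler_pM2l Agt0).
have -> : A * (2 * (S / A) * S) = 2 * S ^+ 2 by field.
have -> : A * ((S / A) ^+ 2 * A + \sum_i b i ^+ 2) = S ^+ 2 + A * \sum_i b i ^+ 2.
  by field.
lra.
Qed.

End SumsOfSquares.

Section EuclideanNorm.
Variables (R : realType) (n : nat).
Implicit Types v w : 'cV[R]_n.

Definition sqnorm v : R := \sum_i v i 0 ^+ 2.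

Lemma sqnorm_ge0 v : 0 <= sqnorm v.
Proof. exact: sum_sqr_ge0. Qed.

Lemma sqnorm0 : sqnorm 0 = 0.
Proof. by rewrite /sqnorm big1 // => i _; rewrite mxE expr0n. Qed.

Lemma sqnorm_eq0 v : (sqnorm v == 0) = (v == 0).
Proof.
apply/eqP/eqP => [v0|->]; last exact: sqnorm0.
by apply/matrixP => i j; rewrite (ord1 j) mxE (sum_sqr_eq0 v0).
Qed.

Lemma sqnormZ k v : sqnorm (k *: v) = k ^+ 2 * sqnorm v.
Proof. by rewrite /sqnorm mulr_sumr; apply: eq_bigr => i _; rewrite mxE exprMn. Qed.

Lemma vnorm_ge0 v : 0 <= vnorm v.
Proof. exact: sqrtr_ge0. Qed.

Lemma sqr_vnorm v : vnorm v ^+ 2 = sqnorm v.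
Proof. by rewrite sqr_sqrtr // sqnorm_ge0. Qed.

Lemma vnorm_eq0 v : (vnorm v == 0) = (v == 0).
Proof. by rewrite -sqrf_eq0 sqr_vnorm sqnorm_eq0. Qed.

Lemma vnormZ k v : vnorm (k *: v) = `|k| * vnorm v.
Proof. by rewrite /vnorm -/(sqnorm _) sqnormZ sqrtrM ?sqr_ge0 // sqrtr_sqr. Qed.

Lemma ler_vnorm v w : (vnorm v <= vnorm w) = (sqnorm v <= sqnorm w).
Proof. by rewrite -ler_sqr ?nnegrE ?vnorm_ge0 // !sqr_vnorm. Qed.

Section LowerBound.
Variables (X : 'M[R]_n) (k : R).
Hypotheses (k_gt0 : 0 < k) (X_ge : forall w, k * vnorm w <= vnorm (X *m w)).

Lemma unitmx_of_vnorm_ge : X \in unitmx.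
Proof.
rewrite -unitmx_tr unitmxE unitfE; apply/negP => /det0P [v].
rewrite -trmx_eq0 -vnorm_eq0 => /negP v0 /(congr1 trmx).
rewrite trmx0 trmx_mul trmxK => Xv0; apply: v0.
rewrite eq_le vnorm_ge0 andbT -(ler_pM2l k_gt0) mulr0 (le_trans (X_ge _)) //.
by rewrite Xv0 /vnorm -/(sqnorm _) sqnorm0 sqrtr0.
Qed.

Lemma opnorm_invmx_le : opnorm (invmx X) <= k^-1.
Proof.
rewrite /opnorm.
set E := [set vnorm (invmx X *m v) | v in [set v | vnorm v = 1]].
have [->|/set0P ne] := eqVneq E set0.
  by rewrite sup0 invr_ge0 ltW.
apply: ge_sup ne _ => _ [v /= v1 <-].
rewrite -(ler_pM2l k_gt0) mulfV ?gt_eqF //.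
by rewrite -v1 (le_trans (X_ge _)) // mulmxA mulmxV ?unitmx_of_vnorm_ge // mul1mx.
Qed.

End LowerBound.
End EuclideanNorm.

Section QuadraticForms.
Variables (R : realType) (n : nat).
Implicit Types (v : 'cV[R]_n) (M C : 'M[R]_n).

Lemma qformE M v : qform M v = \sum_i v i 0 * (M *m v) i 0.
Proof. by rewrite /qform -mulmxA mxE; apply: eq_bigr => i _; rewrite mxE. Qed.

Lemma qform0 M : qform M 0 = 0.
Proof. by rewrite /qform mulmx0 mxE. Qed.

Lemma qformD M1 M2 v : qform (M1 + M2) v = qform M1 v + qform M2 v.
Proof. by rewrite /qform mulmxDr mulmxDl mxE. Qed.

Lemma qformZ M k v : qform M (k *: v) = k ^+ 2 * qform M v.
Proof.
by rewrite /qform -scalemxAr linearZ /= -!scalemxAl !mxE mulrA expr2.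
Qed.

Lemma qform_conj C M v : qform (C *m M *m C^T) v = qform M (C^T *m v).
Proof. by rewrite /qform trmx_mul trmxK !mulmxA. Qed.

Lemma qform_mul_tr m (C : 'M[R]_(n, m)) v : qform (C *m C^T) v = sqnorm (C^T *m v).
Proof.
rewrite /qform.
have -> : v^T *m (C *m C^T) *m v = (C^T *m v)^T *m (C^T *m v).
  by rewrite trmx_mul trmxK !mulmxA.
rewrite mxE.
by apply: eq_bigr => i _; rewrite !mxE expr2.
Qed.

Lemma qform_mul_tr_ge0 m (C : 'M[R]_(n, m)) v : 0 <= qform (C *m C^T) v.
Proof. by rewrite qform_mul_tr sqnorm_ge0. Qed.

Lemma cinf_le C v : cinf C * sqnorm v <= qform (C *m C^T) v.
Proof.
have [->|v0] := eqVneq v 0; first by rewrite qform0 sqnorm0 mulr0.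
have r_gt0 : 0 < vnorm v by rewrite lt_def vnorm_eq0 v0 vnorm_ge0.
have : cinf C <= qform (C *m C^T) ((vnorm v)^-1 *: v).
  apply: ge_inf; first by exists 0 => _ [w _ <-]; exact: qform_mul_tr_ge0.
  exists ((vnorm v)^-1 *: v) => //=.
  by rewrite vnormZ gtr0_norm ?invr_gt0 // mulVf ?gt_eqF.
rewrite qformZ exprVn sqr_vnorm mulrC -ler_pdivlMr //.
by rewrite lt_def sqnorm_eq0 v0 sqnorm_ge0.
Qed.

Lemma cinf_gt0 C : (0 < n)%N -> \rank C = n -> 0 < cinf C.
Proof.
move=> n_gt0 rkC.
have CTu : C^T \in unitmx by rewrite unitmx_tr -row_free_unit /row_free rkC.
set D := invmx C^T; set K := \sum_i \sum_j D i j ^+ 2.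
have K_ge0 : 0 <= K by apply: sumr_ge0 => i _; exact: sum_sqr_ge0.
suff : (K + 1)^-1 <= cinf C by apply: lt_le_trans; rewrite invr_gt0; lra.
apply: lb_le_inf.
  case: n n_gt0 C {rkC CTu D K K_ge0} => // n' _ C.
  exists (qform (C *m C^T) (delta_mx 0 0)), (delta_mx 0 0) => //=.
  rewrite /vnorm (bigD1 ord0) //= big1 => [|i /negbTE i0]; last by rewrite mxE i0 expr0n.
  by rewrite mxE expr1n addr0 sqrtr1.
move=> _ [v /= v1 <-]; rewrite qform_mul_tr; set y := C^T *m v.
have vE : v = D *m y by rewrite /y mulmxA mulVmx // mul1mx.
have : sqnorm v <= K * sqnorm y.
  rewrite /K mulr_suml; apply: ler_sum => i _.
  by rewrite {1}vE mxE; exact: (cauchy_schwarz (fun j => D i j) (fun j => y j 0)).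
rewrite -sqr_vnorm v1 expr1n => le1Ky.
rewrite -div1r ler_pdivrMr; last by lra.
by rewrite mulrDr mulr1 mulrC; apply: le_trans le1Ky _; rewrite lerDl sqnorm_ge0.
Qed.

End QuadraticForms.

Section Model.
Variables (R : realType) (n : nat).
Implicit Types (v w S : 'cV[R]_n) (C Sg : 'M[R]_n).

Lemma qform_SigS A B C Sig0 Z t v :
  qform (Sig A B C Sig0 Z t.+1) v = sqnorm (C^T *m v)
    + qform (Sig A B C Sig0 Z t) (A^T *m v) + sqnorm ((B *m Z t.+1)^T *m v).
Proof.
by rewrite /= !qformD qform_conj -!qform_mul_tr trmx_mul !mulmxA.
Qed.

Lemma qform_Sig_ge0 A B C Sig0 Z : posdef Sig0 ->
  forall t v, 0 <= qform (Sig A B C Sig0 Z t) v.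
Proof.
move=> [_ Sig0_pos]; elim=> [|t IH] v.
  by have [->|v0] := eqVneq v 0; [rewrite qform0 | exact/ltW/Sig0_pos].
by rewrite qform_SigS !addr_ge0 ?sqnorm_ge0.
Qed.

Lemma cinf_le_qform_Sig A B C Sig0 Z : posdef Sig0 ->
  forall t v, cinf C * sqnorm v <= qform (Sig A B C Sig0 Z t.+1) v.
Proof.
move=> Sig0_pd t v; rewrite (le_trans (cinf_le C v)) // qform_mul_tr qform_SigS.
by rewrite -addrA lerDl addr_ge0 ?sqnorm_ge0 ?qform_Sig_ge0.
Qed.

Lemma Sp_ge mu S0 h Z slow : (forall s r, slow <= h s r) ->
  forall t i, slow <= Sp mu S0 h Z t.+1 i 0.
Proof. by move=> h_ge t i /=; rewrite mxE. Qed.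

Lemma Psi_unitmx S : (forall i, 0 < S i 0) -> Psi S \in unitmx.
Proof.
move=> S_gt0; rewrite unitmxE det_diag unitfE prodf_seq_neq0.
by apply/allP => i _; rewrite mxE gt_eqF.
Qed.

Lemma Minv_PsiE gamma eps q S Sg : Psi S \in unitmx ->
  Minv gamma eps q S Sg
  = invmx (1%:M + (gamma / (eps * q S (Pmat S Sg))) *: (Psi S *m Sg)).
Proof.
move=> Psi_u; rewrite /Minv /Ptilde /Pmat -scalemxAl.
by rewrite -(mulmxA (Psi S *m Sg)) mulmxV ?mulmx1.
Qed.

Lemma vnorm_resolvent_ge S Sg (a c s : R) :
  0 < s -> (forall i, s <= S i 0) -> 0 <= a -> 0 <= c ->
  (forall w, c * sqnorm w <= qform Sg w) ->
  forall w, a * c * s * vnorm w <= vnorm ((1%:M + a *: (Psi S *m Sg)) *m w).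
Proof.
move=> s_gt0 S_ge a_ge0 c_ge0 Sg_ge w.
set u := (1%:M + a *: (Psi S *m Sg)) *m w; set t := a * c.
have S_gt0 i : 0 < S i 0 by apply: lt_le_trans (S_ge i).
have uE i : u i 0 = S i 0 * (w i 0 / S i 0 + a * (Sg *m w) i 0).
  rewrite /u mulmxDl mul1mx -scalemxAl -mulmxA /Psi mul_diag_mx !mxE.
  by field; rewrite gt_eqF.
pose y := \col_i (u i 0 / S i 0).
have t_le_dot : t * sqnorm w <= \sum_i w i 0 * y i 0.
  have -> : \sum_i w i 0 * y i 0 = \sum_i w i 0 ^+ 2 / S i 0 + a * qform Sg w.
    rewrite qformE mulr_sumr -big_split; apply: eq_bigr => i _ /=.
    by rewrite mxE uE; field; rewrite gt_eqF.
  rewrite -mulrA ler_wpDl ?ler_wpM2l //.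
  by apply: sumr_ge0 => i _; rewrite divr_ge0 ?sqr_ge0 ?ltW.
have y_le : s ^+ 2 * sqnorm y <= sqnorm u.
  rewrite /sqnorm mulr_sumr; apply: ler_sum => i _.
  rewrite mxE expr_div_n mulrA ler_pdivrMr ?exprn_gt0 // mulrC ler_wpM2l ?sqr_ge0 //.
  by rewrite ler_sqr ?nnegrE ?S_ge ?(ltW s_gt0) ?(ltW (S_gt0 i)).
(* Young's inequality with weight t avoids dividing by |w|. *)
have := sum_mul_le_sqr (fun i => w i 0) (fun i => y i 0) t.
rewrite -/(sqnorm w) -/(sqnorm y) => amgm.
have t2_le : t ^+ 2 * sqnorm w <= sqnorm y.
  have : 2 * t * (t * sqnorm w) <= 2 * t * \sum_i w i 0 * y i 0.
    by rewrite ler_wpM2l // mulr_ge0 // mulr_ge0.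
  move: amgm; rewrite expr2; lra.
have ts_ge0 : 0 <= t * s by rewrite !mulr_ge0 // ltW.
rewrite -[t * s]ger0_norm // -vnormZ ler_vnorm sqnormZ (le_trans _ y_le) //.
by rewrite exprMn [t ^+ 2 * _]mulrC -mulrA ler_wpM2l ?sqr_ge0.
Qed.
Lemma opnorm_Minv_le gamma eps q S Sg (c s chi Hb : R) :
  0 < gamma -> 0 < eps -> 0 < c -> 0 < s -> s <= Hb -> (forall i, s <= S i 0) ->
  0 < q S (Pmat S Sg) <= chi -> (forall w, c * sqnorm w <= qform Sg w) ->
  opnorm (Minv gamma eps q S Sg) <= eps * (chi * Hb / (gamma * s ^+ 2 * c)).
Proof.
move=> gamma_gt0 eps_gt0 c_gt0 s_gt0 s_le_Hb S_ge /andP [q_gt0 q_le] Sg_ge.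
have S_gt0 i : 0 < S i 0 by apply: lt_le_trans (S_ge i).
set a := gamma / (eps * q S (Pmat S Sg)).
have a_gt0 : 0 < a by rewrite divr_gt0 // mulr_gt0.
have acs_gt0 : 0 < a * c * s by do 2 apply: mulr_gt0 => //.
rewrite Minv_PsiE; last exact: Psi_unitmx.
apply: le_trans (opnorm_invmx_le acs_gt0 _) _.
  by apply: vnorm_resolvent_ge; rewrite ?ltW.
have -> : (a * c * s)^-1 = eps * (q S (Pmat S Sg) * s / (gamma * s ^+ 2 * c)).
  by rewrite /a; field; rewrite !gt_eqF.
rewrite ler_pM2l // ler_pM2r ?invr_gt0 ?mulr_gt0 ?exprn_gt0 //.
by rewrite ler_pM ?(ltW q_gt0) ?(ltW s_gt0).
Qed.

End Model.

Theorem proposition1 (R : realType) (n : nat) (mu : 'cV[R]_n)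
  (A B C Sig0 : 'M[R]_n) (S0 : 'cV[R]_n) (h : R -> R -> R)
  (q : 'cV[R]_n -> 'M[R]_n -> R) (gamma chi slow : R)
  (Z : nat -> 'cV[R]_n) :
  (0 < n)%N ->
  posdef Sig0 ->
  (forall i, 0 < S0 i 0) ->
  0 < gamma ->
  (* (i) C has full rank *)
  \rank C = n ->
  (* (ii) h bounded, and bounded below by slow > 0 *)
  has_ubound [set `|h sr.1 sr.2| | sr in [set: R * R]] ->
  0 < slow -> (forall s r, slow <= h s r) ->
  (* (iii) 1 <= q <= chi *)
  (forall s p, 1 <= q s p <= chi) ->
  let c := cinf C in
  let H := hsup h in
  let kappa := chi * H / (gamma * slow ^+ 2 * c) in
  let M eps t := Minv gamma eps q (Sp mu S0 h Z t) (Sig A B C Sig0 Z t) in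
  (forall eps, 0 < eps -> eps * chi * H < gamma * slow ^+ 2 * c ->
     forall t, (1 <= t)%N ->
       opnorm (M eps t) <= eps * kappa / (1 - eps ^+ 2 * kappa ^+ 2))
  /\
  (forall delta, 0 <= delta < 1 ->
     exists eps0, 0 < eps0 /\
       forall eps, 0 < eps < eps0 ->
         exists Delta, Delta < 1 /\
           forall t, (1 <= t)%N -> delta * opnorm (M eps t) <= Delta).
Proof.
move=> n_gt0 Sig0_pd _ gamma_gt0 rkC h_ub slow_gt0 h_ge q_bnd c H kappa M.
have c_gt0 : 0 < c by exact: cinf_gt0.
have slow_le_H : slow <= H.
  rewrite (le_trans (h_ge 0 0)) // (le_trans (ler_norm _)) //.
  by apply: (ub_le_sup h_ub); exists (0, 0).
have q_ge1 s p : 1 <= q s p by case/andP: (q_bnd s p).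
have q_le s p : q s p <= chi by case/andP: (q_bnd s p).
have den_gt0 : 0 < gamma * slow ^+ 2 * c by rewrite !mulr_gt0 ?exprn_gt0.
have chi_gt0 : 0 < chi by apply: lt_le_trans ltr01 (le_trans (q_ge1 0 0) (q_le 0 0)).
have kappa_gt0 : 0 < kappa.
  by rewrite divr_gt0 // mulr_gt0 // (lt_le_trans slow_gt0).
have M_le eps t : 0 < eps -> opnorm (M eps t.+1) <= eps * kappa.
  move=> eps_gt0; apply: opnorm_Minv_le => //.
  - exact: Sp_ge.
  - by rewrite q_le (lt_le_trans ltr01).
  - exact: cinf_le_qform_Sig.
split=> [eps eps_gt0 small [//|t] _ | delta /andP [delta_ge0 delta_lt1]].
  have k_ge0 : 0 <= eps * kappa by rewrite mulr_ge0 ?ltW.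
  have k_lt1 : eps * kappa < 1 by rewrite /kappa mulrA ltr_pdivrMr // mul1r mulrA.
  rewrite (le_trans (M_le eps t eps_gt0)) // -exprMn ler_pdivlMr; last by nra.
  by rewrite mulrBr mulr1 gerBl mulr_ge0 ?sqr_ge0.
exists kappa^-1; split=> [|eps /andP [eps_gt0 eps_lt]]; first by rewrite invr_gt0.
have k_lt1 : eps * kappa < 1 by rewrite -ltr_pdivlMr // div1r.
exists (delta * (eps * kappa)); split=> [|[//|t] _]; first by nra.
by rewrite ler_wpM2l // M_le.
Qed.
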